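(* Let $m\ge1$, let $C\in\mathbb{R}^{m\times 3}$, and let $A,B^t\in\mathcal{Q}_0(C)$ (so $A\in\mathbb{R}^{m\times3}$, $B\in\mathbb{R}^{3\times m}$). Suppose the DSR graph $G_{A,B}$ satisfies: (i) every e-cycle of length $4$ is an s-cycle; and (ii) every o-cycle of length $6$ is an s-cycle. Then no nonreal eigenvalue of $AB$ lies in the open left half-plane $\mathbb{C}_-$.
   Context: For $M\in\mathbb{R}^{n\times m}$, $\mathcal{Q}(M)$ is the set of matrices with the same sign pattern as $M$ (entrywise signs in $\{-,0,+\}$ equal), and $\mathcal{Q}_0(M)$ is its closure. DSR graphs: for $A\in\mathbb{R}^{n\times m}$, $B\in\mathbb{R}^{m\times n}$, $G_{A,B}$ is the signed, labelled bipartite digraph with S-vertices $S_1,\dots,S_n$ and R-vertices $R_1,\dots,R_m$, having an arc $R_j\to S_i$ of sign $\mathrm{sign}(A_{ij})$ iff $A_{ij}\ne0$, and an arc $S_i\to R_j$ of sign $\mathrm{sign}(B_{ji})$ iff $B_{ji}\neq 0$. A pair of antiparallel arcs between $S_i$ and $R_j$ with the same sign is regarded as a single undirected edge (traversable in either direction). An edge arising from $A_{ij}\ne0$ (R-to-S or undirected) has label $|A_{ij}|$; an edge with only S-to-R orientation has label $\infty$. Walks traverse edges consistently with their orientation; the length of a walk is its number of edges (with multiplicity), its sign is the product of its edge signs. A cycle is a nonempty closed walk repeating no vertex except first$=$last. The parity of a cycle $W$ (of even length) is $P(W)=(-1)^{|W|/2}\mathrm{sign}(W)$; it is an e-cycle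 if $P=1$ and an o-cycle if $P=-1$. A cycle $(e_1,\dots,e_{2r})$ is an s-cycle if all its labels are finite and $\prod_{i=1}^r l(e_{2i-1})=\prod_{i=1}^r l(e_{2i})$. *)

From HB Require Import structures.
From mathcomp Require Import all_boot all_order all_algebra.
From mathcomp Require Import reals.
From mathcomp Require Export complex.

Set Implicit Arguments.
Unset Strict Implicit.
Unset Printing Implicit Defensive.

Import Order.TTheory GRing.Theory Num.Theory.
Local Open Scope ring_scope.

Definition in_Q0 (R : realDomainType) (n p : nat) (M M' : 'M[R]_(n, p)) : Prop :=
  forall i j, M' i j = 0 \/ Num.sg (M' i j) = Num.sg (M i j).

(* A : 'M_(n, k), B : 'M_(k, n).  S-vertices S_1..S_n are [inl i],
   R-vertices R_1..R_k are [inr j]. *)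
Definition dsr_vertex (n k : nat) := ('I_n + 'I_k)%type.

(* Edge data: sign (in {-1,1}) and label; label [None] means infinity. *)
Record dsr_edge (R : Type) := DsrEdge { e_sign : R; e_label : option R }.

(* The (unique, if any) edge of G_{A,B} that can be traversed from u to v.
   - R_j -> S_i exists iff A_ij <> 0; it is either an R-to-S arc or the
     undirected edge (if also B_ji has the same sign); in both cases its
     sign is sign(A_ij) and its label |A_ij|.
   - S_i -> R_j exists iff B_ji <> 0; if A_ij <> 0 with the same sign it is
     the undirected edge (label |A_ij|), otherwise it is an S-to-R-only arc
     of sign sign(B_ji) and label infinity. *)
Definition dsr_step (R : realDomainType) (n k : nat)
    (A : 'M[R]_(n, k)) (B : 'M[R]_(k, n)) (u v : dsr_vertex n k)
    : option (dsr_edge R) :=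
  match u, v with
  | inr j, inl i =>
      if A i j != 0 then Some (DsrEdge (Num.sg (A i j)) (Some `|A i j|))
      else None
  | inl i, inr j =>
      if B j i != 0 then
        if (A i j != 0) && (Num.sg (A i j) == Num.sg (B j i))
        then Some (DsrEdge (Num.sg (B j i)) (Some `|A i j|))
        else Some (DsrEdge (Num.sg (B j i)) None)
      else None
  | _, _ => None
  end.

(* Its edges are
   e_1, ..., e_L, where e_{t+1} is the edge from c t to c (t+1 mod L),
   t : 'I_L.  (Every cycle in the sense of the paper arises this way, and
   the notions below are invariant under the choice of starting vertex.) *)
Definition dsr_cycle (R : realDomainType) (n k : nat)
    (A : 'M[R]_(n, k)) (B : 'M[R]_(k, n)) (L : nat)
    (c : 'I_L -> dsr_vertex n k) : Prop :=
  [/\ (0 < L)%N, injective c & forall t : 'I_L, dsr_step A B (c t) (c (ordS t)) <> None].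

Definition cyc_edge (R : realDomainType) (n k : nat)
    (A : 'M[R]_(n, k)) (B : 'M[R]_(k, n)) (L : nat)
    (c : 'I_L -> dsr_vertex n k) (t : 'I_L) : option (dsr_edge R) :=
  dsr_step A B (c t) (c (ordS t)).

Definition opt_sign (R : realDomainType) (o : option (dsr_edge R)) : R :=
  if o is Some e then e_sign e else 1.

Definition cyc_sign (R : realDomainType) (n k : nat)
    (A : 'M[R]_(n, k)) (B : 'M[R]_(k, n)) (L : nat)
    (c : 'I_L -> dsr_vertex n k) : R :=
  \prod_(t < L) opt_sign (cyc_edge A B c t).

Definition cyc_parity (R : realDomainType) (n k : nat)
    (A : 'M[R]_(n, k)) (B : 'M[R]_(k, n)) (L : nat)
    (c : 'I_L -> dsr_vertex n k) : R :=
  (-1) ^+ (L./2) * cyc_sign A B c.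

Definition e_cycle (R : realDomainType) (n k : nat)
    (A : 'M[R]_(n, k)) (B : 'M[R]_(k, n)) (L : nat)
    (c : 'I_L -> dsr_vertex n k) : Prop :=
  dsr_cycle A B c /\ cyc_parity A B c = 1.

Definition o_cycle (R : realDomainType) (n k : nat)
    (A : 'M[R]_(n, k)) (B : 'M[R]_(k, n)) (L : nat)
    (c : 'I_L -> dsr_vertex n k) : Prop :=
  dsr_cycle A B c /\ cyc_parity A B c = -1.

(* finite label of an edge (None = infinite label or no edge) *)
Definition opt_label (R : realDomainType) (o : option (dsr_edge R)) : option R :=
  if o is Some e then e_label e else None.

(* s-cycle: all labels finite and l(e_1) l(e_3) ... = l(e_2) l(e_4) ...;
   with 0-based t, e_{t+1} is odd-numbered iff t is even. *)
Definition s_cycle (R : realDomainType) (n k : nat)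
    (A : 'M[R]_(n, k)) (B : 'M[R]_(k, n)) (L : nat)
    (c : 'I_L -> dsr_vertex n k) : Prop :=
  dsr_cycle A B c /\
  exists l : 'I_L -> R,
    (forall t, opt_label (cyc_edge A B c t) = Some (l t)) /\
    \prod_(t < L | ~~ odd t) l t = \prod_(t < L | odd t) l t.

(* A nonzero eigenvalue of A B is an eigenvalue of M = B A, a 3 x 3 matrix with
   characteristic polynomial z^3 - a1 z^2 + a2 z - a3, and a real cubic with
   a1 a2 >= a3 has no nonreal root with negative real part.  The cubic form
   a1 a2 - a3 = det((tr M) I - M) is expanded by polarization along
   M = sum_i B_i A_i (column i of B times row i of A).  On three rank-one pieces
   the polarization is, by a polynomial identity, a sum of terms
   (A_ic B_ci) * (2 x 2 minor of A) * (2 x 2 minor of B^T) and of differences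
   between a product of three A_ic B_ci and the signed weight of a closed walk
   R -> S -> R -> S -> R -> S -> R.  All these terms are nonnegative: when the
   relevant walk weight is positive, the walk is an e-cycle of length 4 or an
   o-cycle of length 6 (or contains a 4-cycle when it revisits an S-vertex),
   and the s-cycle condition turns its weight into the corresponding product of
   the A_ic B_ci, which are nonnegative by the sign-pattern hypothesis. *)
From HB Require Import structures.
From mathcomp Require Import all_boot all_order all_algebra.
From mathcomp Require Import reals complex.
From mathcomp Require Import ring lra.

Import Order.TTheory GRing.Theory Num.Theory.
Set Implicit Arguments.
Unset Strict Implicit.
Unset Printing Implicit Defensive.
Local Open Scope ring_scope.

Lemma cubic_nonreal_root_Re_ge0 (R : rcfType) (a1 a2 a3 : R) (z : R[i]) :
  z ^+ 3 - (a1%:C)%C * z ^+ 2 + (a2%:C)%C * z - (a3%:C)%C = 0 -> complex.Im z != 0 ->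
  a3 <= a1 * a2 -> 0 <= complex.Re z.
Proof.
case: z => p q /= root_z q_neq0 a3_le.
have : (p +i* q)%C ^+ 3 - (a1%:C)%C * (p +i* q)%C ^+ 2 + (a2%:C)%C * (p +i* q)%C
       - (a3%:C)%C
    = ((p ^+ 3 - 3 * p * q ^+ 2 - a1 * (p ^+ 2 - q ^+ 2) + a2 * p - a3)
      +i* (q * (3 * p ^+ 2 - q ^+ 2 - 2 * a1 * p + a2)))%C.
  rewrite !exprS expr0 !mulr1; simpc.
  by apply/eqP; rewrite eq_complex /=; apply/andP; split; apply/eqP; ring.
rewrite root_z => /eqP; rewrite eq_complex /= => /andP[/eqP re0 /eqP im0].
have {}im0 : 3 * p ^+ 2 - q ^+ 2 - 2 * a1 * p + a2 = 0.
  by apply/eqP; move/eqP: im0; rewrite eq_sym mulf_eq0 (negbTE q_neq0).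
(* eliminating a3 with the real part and a2 with the imaginary part *)
have hurwitz : a1 * a2 - a3 = 2 * p * ((p - a1) ^+ 2 + q ^+ 2)
                             + (a1 - p) * (3 * p ^+ 2 - q ^+ 2 - 2 * a1 * p + a2).
  by move/eqP: re0; rewrite eq_sym subr_eq0 => /eqP <-; ring.
rewrite im0 mulr0 addr0 in hurwitz.
have dist_gt0 : 0 < (p - a1) ^+ 2 + q ^+ 2.
  by rewrite ltr_wpDl ?sqr_ge0 // lt_def sqrf_eq0 q_neq0 sqr_ge0.
rewrite leNgt; apply/negP => p_lt0.
suff : 2 * p * ((p - a1) ^+ 2 + q ^+ 2) < 0 by lra.
by rewrite pmulr_llt0 // pmulr_rlt0 // ltr0n.
Qed.

Lemma eigenvalue_mulmxC (F : fieldType) (m k : nat) (A : 'M[F]_(m, k))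
    (B : 'M[F]_(k, m)) (l : F) :
  l != 0 -> eigenvalue (A *m B) l -> eigenvalue (B *m A) l.
Proof.
move=> l_neq0 /eigenvalueP[v vAB v_neq0]; apply/eigenvalueP; exists (v *m A).
  by rewrite mulmxA -(mulmxA v) vAB -scalemxAl.
apply: contraNneq v_neq0 => vA0.
have : l *: v == 0 by rewrite -vAB mulmxA vA0 mul0mx.
by rewrite scaler_eq0 (negbTE l_neq0).
Qed.

Lemma eigenvalue_det (F : fieldType) (n : nat) (M : 'M[F]_n) (l : F) :
  eigenvalue M l -> \det (M - l%:M) = 0.
Proof.
move=> /eigenvalueP[v vM v_neq0]; apply/eqP/det0P; exists v => //.
by rewrite mulmxBr vM mul_mx_scalar subrr.
Qed.

Definition o0 : 'I_3 := @Ordinal 3 0 isT.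
Definition o1 : 'I_3 := @Ordinal 3 1 isT.
Definition o2 : 'I_3 := @Ordinal 3 2 isT.

(* [ring] compares matrix entries syntactically, so the ordinals produced by
   [lift] are rewritten to o0, o1, o2. *)
Ltac ord3_canon t :=
  lazymatch t with
  | o0 => idtac | o1 => idtac | o2 => idtac
  | _ => let v := eval compute in (nat_of_ord t) in
    lazymatch v with
    | 0%N => rewrite (_ : t = o0); [|by apply: val_inj]
    | 1%N => rewrite (_ : t = o1); [|by apply: val_inj]
    | 2%N => rewrite (_ : t = o2); [|by apply: val_inj]
    end
  end.

Ltac mx3_canon M :=
  repeat match goal with
  | |- context [@fun_of_matrix _ _ _ M ?i ?j] => progress (try ord3_canon i; try ord3_canon j)
  end.

Section ThreeByThree.

Variable R : comNzRingType.
Implicit Types M X Y Z : 'M[R]_3.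

Definition minor2_sum M : R :=
  M o0 o0 * M o1 o1 - M o0 o1 * M o1 o0 + M o0 o0 * M o2 o2 - M o0 o2 * M o2 o0
  + M o1 o1 * M o2 o2 - M o1 o2 * M o2 o1.

Lemma mxtrace3 M : \tr M = M o0 o0 + M o1 o1 + M o2 o2.
Proof.
by rewrite /mxtrace !big_ord_recl big_ord0 addr0 addrA; mx3_canon M.
Qed.

Lemma det_mx33 M :
  \det M = M o0 o0 * (M o1 o1 * M o2 o2 - M o1 o2 * M o2 o1)
         - M o0 o1 * (M o1 o0 * M o2 o2 - M o1 o2 * M o2 o0)
         + M o0 o2 * (M o1 o0 * M o2 o1 - M o1 o1 * M o2 o0).
Proof.
do 3 rewrite !(expand_det_row _ ord0) !big_ord_recl !big_ord0 /cofactor.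
by rewrite !det_mx00 !mxE /=; mx3_canon M; rewrite /bump /=; ring.
Qed.

Definition hurwitz2 M : R := \tr M * minor2_sum M - \det M.

(* [polar3_term X Y Z] is the determinant of the matrix whose rows are row 0
   of (tr X) I - X, row 1 of (tr Y) I - Y and row 2 of (tr Z) I - Z; since
   det((tr M) I - M) = hurwitz2 M, its symmetrization [polar3] is the
   polarization of the cubic form [hurwitz2]. *)
Definition polar3_term X Y Z : R :=
  let k00 := X o1 o1 + X o2 o2 in let k01 := - X o0 o1 in let k02 := - X o0 o2 in
  let k10 := - Y o1 o0 in let k11 := Y o0 o0 + Y o2 o2 in let k12 := - Y o1 o2 in
  let k20 := - Z o2 o0 in let k21 := - Z o2 o1 in let k22 := Z o0 o0 + Z o1 o1 in
  k00 * (k11 * k22 - k12 * k21) - k01 * (k10 * k22 - k12 * k20)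
  + k02 * (k10 * k21 - k11 * k20).

Definition polar3 X Y Z : R :=
  polar3_term X Y Z + polar3_term X Z Y + polar3_term Y X Z
  + polar3_term Y Z X + polar3_term Z X Y + polar3_term Z Y X.

Lemma polar3_diag M : polar3 M M M = 6 * hurwitz2 M.
Proof. by rewrite /polar3 /polar3_term /hurwitz2 mxtrace3 det_mx33 /minor2_sum; ring. Qed.

Lemma polar3C12 X Y Z : polar3 X Y Z = polar3 Y X Z.
Proof. by rewrite /polar3; ring. Qed.

Lemma polar3C13 X Y Z : polar3 X Y Z = polar3 Z Y X.
Proof. by rewrite /polar3; ring. Qed.

Lemma polar3_suml (I : finType) (F : I -> 'M[R]_3) Y Z :
  polar3 (\sum_i F i) Y Z = \sum_i polar3 (F i) Y Z.
Proof.
apply: (big_morph (fun X => polar3 X Y Z)) => [X X'|];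
  by rewrite /polar3 /polar3_term !mxE; ring.
Qed.

Lemma polar3_sum (I : finType) (F : I -> 'M[R]_3) :
  polar3 (\sum_i F i) (\sum_i F i) (\sum_i F i)
  = \sum_i \sum_j \sum_k polar3 (F i) (F j) (F k).
Proof.
rewrite polar3_suml; apply: eq_bigr => i _.
rewrite polar3C12 polar3_suml; apply: eq_bigr => j _.
by rewrite polar3C13 polar3_suml; apply: eq_bigr => k _; rewrite polar3C13 polar3C12.
Qed.

End ThreeByThree.

Lemma char_poly3_root (R : rcfType) (M : 'M[R]_3) (l : R[i]) :
  eigenvalue (map_mx (real_complex R) M) l ->
  l ^+ 3 - ((\tr M)%:C)%C * l ^+ 2 + ((minor2_sum M)%:C)%C * l - ((\det M)%:C)%C = 0.
Proof.
move=> /eigenvalue_det; rewrite det_mx33 !mxE /= => char0.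
rewrite -[RHS]oppr0 -[X in _ = - X]char0 mxtrace3 det_mx33 /minor2_sum.
by rewrite !(rmorphB, rmorphD, rmorphM) /= ?mulr0n ?mulr1n; ring.
Qed.

Section RankOneTerms.

Variables (R : comNzRingType) (m : nat) (A : 'M[R]_(m, 3)) (B : 'M[R]_(3, m)).

Definition colrow (i : 'I_m) : 'M[R]_3 := \matrix_(j, k) (B j i * A i k).

Lemma mulmx_sum_colrow : B *m A = \sum_i colrow i.
Proof. by apply/matrixP => j k; rewrite !mxE summxE; apply: eq_bigr => i _; rewrite mxE. Qed.

Definition edge_prod (i : 'I_m) (u : 'I_3) : R := A i u * B u i.

Definition minor_prod (p q : 'I_m) (u v : 'I_3) : R :=
  (A p u * A q v - A p v * A q u) * (B u p * B v q - B v p * B u q).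

(* the signed weight of the closed walk R_u -> S_p -> R_v -> S_q -> R_w -> S_r -> R_u *)
Definition walk6_weight (p q r : 'I_m) (u v w : 'I_3) : R :=
  A p u * B v p * A q v * B w q * A r w * B u r.

Definition walk6_bound (p q r : 'I_m) (u v w : 'I_3) : R :=
  edge_prod p v * edge_prod q w * edge_prod r u.

Local Notation x := edge_prod.
Local Notation mp := minor_prod.
Local Notation d6 p q r u v w := (walk6_bound p q r u v w - walk6_weight p q r u v w).

Lemma polar3_colrowE i1 i2 i3 :
  polar3 (colrow i1) (colrow i2) (colrow i3) =
    x i1 o0 * mp i2 i3 o0 o1 + x i1 o0 * mp i2 i3 o0 o2 + x i1 o1 * mp i2 i3 o1 o0
  + x i1 o1 * mp i2 i3 o1 o2 + x i1 o2 * mp i2 i3 o2 o0 + x i1 o2 * mp i2 i3 o2 o1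
  + x i2 o0 * mp i1 i3 o0 o1 + x i2 o0 * mp i1 i3 o0 o2 + x i2 o1 * mp i1 i3 o1 o0
  + x i2 o1 * mp i1 i3 o1 o2 + x i2 o2 * mp i1 i3 o2 o0 + x i2 o2 * mp i1 i3 o2 o1
  + x i3 o0 * mp i1 i2 o0 o1 + x i3 o0 * mp i1 i2 o0 o2 + x i3 o1 * mp i1 i2 o1 o0
  + x i3 o1 * mp i1 i2 o1 o2 + x i3 o2 * mp i1 i2 o2 o0 + x i3 o2 * mp i1 i2 o2 o1
  + (d6 i1 i2 i3 o0 o1 o2 + d6 i1 i3 i2 o0 o2 o1 + d6 i1 i2 i3 o0 o2 o1
   + d6 i1 i3 i2 o0 o1 o2 + d6 i1 i2 i3 o1 o0 o2 + d6 i1 i3 i2 o1 o2 o0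
   + d6 i1 i2 i3 o1 o2 o0 + d6 i1 i3 i2 o1 o0 o2 + d6 i1 i2 i3 o2 o0 o1
   + d6 i1 i3 i2 o2 o1 o0 + d6 i1 i2 i3 o2 o1 o0 + d6 i1 i3 i2 o2 o0 o1).
Proof.
by rewrite /polar3 /polar3_term /colrow /minor_prod /walk6_bound /walk6_weight
  /edge_prod !mxE; ring.
Qed.

End RankOneTerms.

Lemma in_Q0_mul_ge0 (R : realDomainType) (m k : nat) (C A : 'M[R]_(m, k))
    (B : 'M[R]_(k, m)) :
  in_Q0 C A -> in_Q0 C B^T -> forall i j, 0 <= A i j * B j i.
Proof.
move=> QA QB i j; case: (QA i j) => [->|sgA]; first by rewrite mul0r.
have := QB i j; rewrite mxE => -[->|sgB]; first by rewrite mulr0.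
by rewrite -sgr_ge0 sgrM sgA sgB -expr2 sqr_ge0.
Qed.

Definition rs_cycle4 (m : nat) (p q : 'I_m) (u v : 'I_3) : 'I_4 -> dsr_vertex m 3 :=
  fun t => match val t with 0 => inr u | 1 => inl p | 2 => inr v | _ => inl q end.

Definition rs_cycle6 (m : nat) (p q r : 'I_m) (u v w : 'I_3) : 'I_6 -> dsr_vertex m 3 :=
  fun t => match val t with
           | 0 => inr u | 1 => inl p | 2 => inr v | 3 => inl q | 4 => inr w | _ => inl r
           end.

Lemma rs_cycle4_inj (m : nat) (p q : 'I_m) (u v : 'I_3) :
  p != q -> u != v -> injective (rs_cycle4 p q u v).
Proof.
move=> pq uv [[|[|[|[|t1]]]] h1] [[|[|[|[|t2]]]] h2] //= E;
  try (by apply: val_inj); try (by case: E);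
  by move: E => [] E; rewrite E eqxx in pq uv.
Qed.

Lemma rs_cycle6_inj (m : nat) (p q r : 'I_m) (u v w : 'I_3) :
  p != q -> q != r -> p != r -> u != v -> v != w -> u != w ->
  injective (rs_cycle6 p q r u v w).
Proof.
move=> pq qr pr uv vw uw [[|[|[|[|[|[|t1]]]]]] h1] [[|[|[|[|[|[|t2]]]]]] h2] //= E;
  try (by apply: val_inj); try (by case: E);
  by move: E => [] E; rewrite E eqxx in pq qr pr uv vw uw.
Qed.

Lemma prod_ord4 (R : comNzRingType) (F : 'I_4 -> R) :
  \prod_(t < 4) F t
  = F (@Ordinal 4 0 isT) * F (@Ordinal 4 1 isT) * F (@Ordinal 4 2 isT)
    * F (@Ordinal 4 3 isT).
Proof.
rewrite !big_ord_recl big_ord0 mulr1 !mulrA.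
by congr (F _ * F _ * F _ * F _); apply: val_inj.
Qed.

Lemma prod_ord6 (R : comNzRingType) (F : 'I_6 -> R) :
  \prod_(t < 6) F t
  = F (@Ordinal 6 0 isT) * F (@Ordinal 6 1 isT) * F (@Ordinal 6 2 isT)
    * F (@Ordinal 6 3 isT) * F (@Ordinal 6 4 isT) * F (@Ordinal 6 5 isT).
Proof.
rewrite !big_ord_recl big_ord0 mulr1 !mulrA.
by congr (F _ * F _ * F _ * F _ * F _ * F _); apply: val_inj.
Qed.

Section CycleBounds.

Variables (R : realDomainType) (m : nat) (A : 'M[R]_(m, 3)) (B : 'M[R]_(3, m)).
Hypothesis AB_ge0 : forall i j, 0 <= A i j * B j i.
Hypothesis e4_s : forall c : 'I_4 -> dsr_vertex m 3, e_cycle A B c -> s_cycle A B c.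
Hypothesis o6_s : forall c : 'I_6 -> dsr_vertex m 3, o_cycle A B c -> s_cycle A B c.

Local Notation x := (edge_prod A B).

Lemma edge_prod_ge0 i u : 0 <= x i u.
Proof. exact: AB_ge0. Qed.

Lemma edge_prod_norm i u : x i u = `|A i u| * `|B u i|.
Proof. by rewrite -normrM ger0_norm ?edge_prod_ge0. Qed.

(* A positive weight makes R_u -> S_p -> R_v -> S_q -> R_u an e-cycle; its
   s-cycle labels give |A_pu| |A_qv| = |A_pv| |A_qu|. *)
Lemma walk4_weight_le p q u v : u != v ->
  A p u * A q v * B v p * B u q <= x p v * x q u.
Proof.
move=> uv; case: (eqVneq p q) => [<-|pq].
  by rewrite /edge_prod le_eqVlt; apply/orP; left; apply/eqP; ring.
case: (leP (A p u * A q v * B v p * B u q) 0) => [w_le0|w_gt0].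
  by apply: le_trans w_le0 _; rewrite mulr_ge0 ?edge_prod_ge0.
move: (lt0r_neq0 w_gt0); rewrite !mulf_eq0 !negb_or => /andP[/andP[/andP[n1 n2] n3] n4].
have cyc : dsr_cycle A B (rs_cycle4 p q u v).
  split=> //; first exact: rs_cycle4_inj.
  by move=> [[|[|[|[|t]]]] ht] //=; rewrite ?n1 ?n2 ?n3 ?n4 //; case: ifP.
have par : cyc_parity A B (rs_cycle4 p q u v) = 1.
  rewrite /cyc_parity /cyc_sign prod_ord4 /cyc_edge /= n1 n2 n3 n4 /=.
  by case: ifP => _; case: ifP => _ /=; rewrite -[RHS](gtr0_sg w_gt0) !sgrM; ring.
have [_ [l [hl labels]]] := e4_s (conj cyc par).
move: (hl (@Ordinal 4 0 isT)); rewrite /cyc_edge /= n1 => -[] l0.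
move: (hl (@Ordinal 4 2 isT)); rewrite /cyc_edge /= n2 => -[] l2.
move: (hl (@Ordinal 4 1 isT)); rewrite /cyc_edge /= n3.
case: ifP => //= _ [] l1.
move: (hl (@Ordinal 4 3 isT)); rewrite /cyc_edge /= n4.
case: ifP => //= _ [] l3.
rewrite big_mkcond prod_ord4 [RHS]big_mkcond prod_ord4 /= !mulr1 !mul1r in labels.
rewrite -l0 -l1 -l2 -l3 in labels.
rewrite !edge_prod_norm -[leLHS](ger0_norm (ltW w_gt0)) !normrM le_eqVlt; apply/orP; left.
apply/eqP; transitivity ((`|A p u| * `|A q v|) * (`|B v p| * `|B u q|)); first ring.
by rewrite labels; ring.
Qed.

Lemma minor_prod_ge0 p q u v : u != v -> 0 <= minor_prod A B p q u v.
Proof.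
move=> uv; have vu : v != u by rewrite eq_sym.
rewrite (_ : minor_prod A B p q u v
  = (x p v * x q u - A p u * A q v * B v p * B u q)
  + (x p u * x q v - A p v * A q u * B u p * B v q)).
  by rewrite addr_ge0 // subr_ge0 walk4_weight_le.
by rewrite /minor_prod /edge_prod; ring.
Qed.

(* A positive weight makes the walk an o-cycle; its s-cycle labels give
   |A_pu| |A_qv| |A_rw| = |A_pv| |A_qw| |A_ru|. *)
Lemma walk6_weight_le_distinct p q r u v w :
  p != q -> q != r -> p != r -> u != v -> v != w -> u != w ->
  walk6_weight A B p q r u v w <= walk6_bound A B p q r u v w.
Proof.
move=> pq qr pr uv vw uw; rewrite /walk6_weight /walk6_bound.
case: (leP (A p u * B v p * A q v * B w q * A r w * B u r) 0) => [w_le0|w_gt0].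
  apply: le_trans w_le0 _.
  by apply: mulr_ge0; [apply: mulr_ge0|]; exact: edge_prod_ge0.
move: (lt0r_neq0 w_gt0); rewrite !mulf_eq0 !negb_or.
move=> /andP[/andP[/andP[/andP[/andP[n1 n2] n3] n4] n5] n6].
have cyc : dsr_cycle A B (rs_cycle6 p q r u v w).
  split=> //; first exact: rs_cycle6_inj.
  by move=> [[|[|[|[|[|[|t]]]]]] ht] //=; rewrite ?n1 ?n2 ?n3 ?n4 ?n5 ?n6 //; case: ifP.
have par : cyc_parity A B (rs_cycle6 p q r u v w) = -1.
  rewrite /cyc_parity /cyc_sign prod_ord6 /cyc_edge /= n1 n2 n3 n4 n5 n6 /=.
  case: ifP => _; case: ifP => _; case: ifP => _ /=;
  by rewrite -[1 in RHS](gtr0_sg w_gt0) !sgrM; ring.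
have [_ [l [hl labels]]] := o6_s (conj cyc par).
move: (hl (@Ordinal 6 0 isT)); rewrite /cyc_edge /= n1 => -[] l0.
move: (hl (@Ordinal 6 2 isT)); rewrite /cyc_edge /= n3 => -[] l2.
move: (hl (@Ordinal 6 4 isT)); rewrite /cyc_edge /= n5 => -[] l4.
move: (hl (@Ordinal 6 1 isT)); rewrite /cyc_edge /= n2.
case: ifP => //= _ [] l1.
move: (hl (@Ordinal 6 3 isT)); rewrite /cyc_edge /= n4.
case: ifP => //= _ [] l3.
move: (hl (@Ordinal 6 5 isT)); rewrite /cyc_edge /= n6.
case: ifP => //= _ [] l5.
rewrite big_mkcond prod_ord6 [RHS]big_mkcond prod_ord6 /= !mulr1 !mul1r in labels.
rewrite -l0 -l1 -l2 -l3 -l4 -l5 in labels.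
rewrite !edge_prod_norm -[leLHS](ger0_norm (ltW w_gt0)) !normrM le_eqVlt; apply/orP; left.
apply/eqP; transitivity ((`|A p u| * `|A q v| * `|A r w|)
                         * (`|B v p| * `|B w q| * `|B u r|)); first ring.
by rewrite labels; ring.
Qed.

(* A walk revisiting an S-vertex splits off a common factor x and a 4-cycle weight. *)
Lemma walk6_weight_le p q r u v w : u != v -> v != w -> u != w ->
  walk6_weight A B p q r u v w <= walk6_bound A B p q r u v w.
Proof.
move=> uv vw uw; case: (eqVneq p q) => [<-|pq].
  have -> : walk6_weight A B p p r u v w = x p v * (A p u * A r w * B w p * B u r).
    by rewrite /walk6_weight /edge_prod; ring.
  have -> : walk6_bound A B p p r u v w = x p v * (x p w * x r u).
    by rewrite /walk6_bound mulrA.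
  by apply: ler_wpM2l; [exact: edge_prod_ge0 | exact: walk4_weight_le].
case: (eqVneq q r) => [<-|qr].
  have -> : walk6_weight A B p q q u v w = x q w * (A p u * A q v * B v p * B u q).
    by rewrite /walk6_weight /edge_prod; ring.
  have -> : walk6_bound A B p q q u v w = x q w * (x p v * x q u).
    by rewrite /walk6_bound; ring.
  by apply: ler_wpM2l; [exact: edge_prod_ge0 | exact: walk4_weight_le].
case: (eqVneq p r) => [<-|pr].
  have -> : walk6_weight A B p q p u v w = x p u * (A q v * A p w * B w q * B v p).
    by rewrite /walk6_weight /edge_prod; ring.
  have -> : walk6_bound A B p q p u v w = x p u * (x q w * x p v).
    by rewrite /walk6_bound; ring.
  by apply: ler_wpM2l; [exact: edge_prod_ge0 | exact: walk4_weight_le].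
exact: walk6_weight_le_distinct.
Qed.

Lemma polar3_colrow_ge0 i1 i2 i3 : 0 <= polar3 (colrow A B i1) (colrow A B i2) (colrow A B i3).
Proof.
rewrite polar3_colrowE.
repeat match goal with
  | |- is_true (0 <= walk6_bound _ _ _ _ _ _ _ _ - walk6_weight _ _ _ _ _ _ _ _) =>
      by rewrite subr_ge0 walk6_weight_le
  | |- is_true (0 <= edge_prod _ _ _ _ * minor_prod _ _ _ _ _ _) =>
      by rewrite mulr_ge0 ?edge_prod_ge0 ?minor_prod_ge0
  | |- is_true (0 <= _ + _) => apply: addr_ge0
  end.
Qed.

Lemma hurwitz2_mulmx_ge0 : 0 <= hurwitz2 (B *m A).
Proof.
rewrite -(pmulr_rge0 _ (ltr0n _ 6)) -polar3_diag mulmx_sum_colrow polar3_sum.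
by do 3 (apply: sumr_ge0 => ? _); exact: polar3_colrow_ge0.
Qed.

End CycleBounds.

Theorem corollary6p1 (R : realType) (m : nat) (C : 'M[R]_(m, 3))
    (A : 'M[R]_(m, 3)) (B : 'M[R]_(3, m)) :
  (0 < m)%N ->
  in_Q0 C A -> in_Q0 C B^T ->
  (forall c : 'I_4 -> dsr_vertex m 3, e_cycle A B c -> s_cycle A B c) ->
  (forall c : 'I_6 -> dsr_vertex m 3, o_cycle A B c -> s_cycle A B c) ->
  forall lambda : R[i],
    eigenvalue (map_mx (real_complex R) (A *m B)) lambda ->
    @complex.Im R lambda != 0 -> ~ (@complex.Re R lambda < 0).
Proof.
move=> _ QA QB e4_s o6_s l eig_AB Im_neq0; apply/negP; rewrite -leNgt.
have l_neq0 : l != 0 by apply: contraNneq Im_neq0 => ->.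
have eig_BA : eigenvalue (map_mx (real_complex R) (B *m A)) l.
  by move: eig_AB; rewrite !map_mxM; exact: (eigenvalue_mulmxC l_neq0).
have hurwitz : \det (B *m A) <= \tr (B *m A) * minor2_sum (B *m A).
  by rewrite -subr_ge0; exact: hurwitz2_mulmx_ge0 (in_Q0_mul_ge0 QA QB) e4_s o6_s.
exact: cubic_nonreal_root_Re_ge0 (char_poly3_root eig_BA) Im_neq0 hurwitz.
Qed.
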